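(* Let $n,m$ be even positive integers. If $n\geq 4$ or $m\geq 4$, then the torus $T_{n,m}$ satisfies $T_{n,m}=0$ as an instance of Bipartite Influence. Let $n$ be an even positive integer and $m$ a positive integer. If ($n\geq 4$ and $m$ is even) or $n=4k+2$ for some positive integer $k$, then the cylinder $C_{n,m}$ satisfies $C_{n,m}=0$ as an instance of Bipartite Influence.
   Context: Cylinder $C_{n,m}$ ($n$ even): vertices $v_{i,j}$, $1\le i\le n$, $1\le j\le m$; $v_{i,j}$ and $v_{i',j'}$ are adjacent iff ($i=i'$ and $j=j'\pm1$) or ($j=j'$ and $i\equiv i'\pm1 \pmod n$). Torus $T_{n,m}$ ($n,m$ even): same vertices, adjacent iff ($i=i'$ and $j\equiv j'\pm1\pmod m$) or ($j=j'$ and $i\equiv i'\pm 1\pmod n$). In both, $v_{i,j}$ is black iff $i+j$ is even, white otherwise. Bipartite Influence: isolated vertices are credited to the owner of their colour (black to Left, white to Right); Left picks a black vertex $x$ and removes $x$, its neighbours and the vertices that become isolated (credited to her); Right likewise with white vertices; score = Left's total minus Right's. $G=0$ means $Ls(G+X)=Ls(X)$ and $Rs(G+X)=Rs(X)$ for every position $X$ (disjoint union as sum), where $Ls,Rs$ are optimal scores with Left, resp. Right, moving first. *)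

From HB Require Import structures.
From mathcomp Require Import all_boot all_order all_algebra.
Unset Printing Implicit Defensive.
Import Order.TTheory GRing.Theory Num.Theory.

(* A position of Bipartite Influence: a finite graph whose vertices are
   coloured black (true, Left's colour) or white (false, Right's colour),
   every edge joining vertices of different colours. *)
Record position := Position {
  pV : finType;
  padj : rel pV;
  pcol : pV -> bool;
  padj_sym : symmetric padj;
  padj_bip : forall x y, padj x y -> pcol x != pcol y }.

Section Game.
Local Open Scope ring_scope.
Variable P : position.

Definition isolated (S : {set pV P}) : {set pV P} :=
  [set x in S | [forall y in S, ~~ padj P x y]].

Definition cnbhd (S : {set pV P}) (x : pV P) : {set pV P} :=
  [set y in S | (y == x) || padj P x y].

Definition after (S : {set pV P}) (x : pV P) : {set pV P} :=
  let S1 := S :\: cnbhd S x in S1 :\: isolated S1.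

(* number of vertices credited to the player playing x *)
Definition gain (S : {set pV P}) (x : pV P) : int :=
  Posz (#|cnbhd S x| + #|isolated (S :\: cnbhd S x)|)%N.

Definition maxl (a : int) (s : seq int) : int := foldr Order.max a s.
Definition minl (a : int) (s : seq int) : int := foldr Order.min a s.

(* optimal score (Left's total minus Right's) of the remaining game on S
   (S without isolated vertices), [lft] = Left to move; fuel k >= #|S|. *)
Fixpoint gval (k : nat) (lft : bool) (S : {set pV P}) : int :=
  match k with
  | 0 => 0
  | k'.+1 =>
    let f x := if lft then gain S x + gval k' false (after S x)
               else - gain S x + gval k' true (after S x) in
    match [seq x <- enum S | pcol P x == lft] with
    | [::] => 0
    | x0 :: xs => if lft then maxl (f x0) (map f xs) else minl (f x0) (map f xs)
    end
  end.

Definition init_score : int :=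
  \sum_(x in isolated setT) (if pcol P x then 1 else -1).

Definition Ls : int := init_score + gval #|pV P| true (setT :\: isolated setT).
Definition Rs : int := init_score + gval #|pV P| false (setT :\: isolated setT).

End Game.

Definition sum_adj (G X : position) : rel (pV G + pV X)%type :=
  fun u v => match u, v with
             | inl a, inl b => padj G a b
             | inr a, inr b => padj X a b
             | _, _ => false end.

Definition sum_col (G X : position) (u : (pV G + pV X)%type) : bool :=
  match u with inl a => pcol G a | inr a => pcol X a end.

Lemma sum_adj_sym G X : symmetric (@sum_adj G X).
Proof. by case=> a [] b //=; apply: padj_sym. Qed.

Lemma sum_adj_bip G X u v : @sum_adj G X u v -> sum_col G X u != sum_col G X v.
Proof. by case: u v => a [] b //= /padj_bip. Qed.

Definition psum (G X : position) : position :=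
  @Position (pV G + pV X)%type (@sum_adj G X) (@sum_col G X)
            (@sum_adj_sym G X) (@sum_adj_bip G X).

Definition is_zero (G : position) : Prop :=
  forall X : position, Ls (psum G X) = Ls X /\ Rs (psum G X) = Rs X.

(* Grids: vertex v_{i,j} is the pair (i-1, j-1) in 'I_n * 'I_m;
   black iff i + j even (shifting both indices by one preserves parity). *)
Definition grid_col (n m : nat) (u : 'I_n * 'I_m) : bool := ~~ odd (u.1 + u.2).

Lemma odd_mod_even a m : ~~ odd m -> odd (a %% m) = odd a.
Proof.
move=> hm; rewrite [in RHS](divn_eq a m) oddD oddM (negbTE hm) andbF.
by [].
Qed.

Definition torus_adj (n m : nat) : rel ('I_n * 'I_m) :=
  fun u v =>
    ((u.1 == v.1 :> nat) && ((u.2.+1 %% m == v.2) || (v.2.+1 %% m == u.2)))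
 || ((u.2 == v.2 :> nat) && ((u.1.+1 %% n == v.1) || (v.1.+1 %% n == u.1))).

Definition cyl_adj (n m : nat) : rel ('I_n * 'I_m) :=
  fun u v =>
    ((u.1 == v.1 :> nat) && ((u.2.+1 == v.2 :> nat) || (v.2.+1 == u.2 :> nat)))
 || ((u.2 == v.2 :> nat) && ((u.1.+1 %% n == v.1) || (v.1.+1 %% n == u.1))).

Lemma torus_adj_sym n m : symmetric (torus_adj n m).
Proof.
move=> u v; rewrite /torus_adj.
by rewrite (eq_sym (val u.1)) (eq_sym (val u.2)) (orbC (_ %% m == _)) (orbC (_ %% n == _)).
Qed.

Lemma cyl_adj_sym n m : symmetric (cyl_adj n m).
Proof.
move=> u v; rewrite /cyl_adj.
by rewrite (eq_sym (val u.1)) (eq_sym (val u.2)) (orbC (_.+1 == _)) (orbC (_ %% n == _)).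
Qed.

Lemma parity_step n a b : ~~ odd n -> (a.+1 %% n == b) || (b.+1 %% n == a) ->
  odd b = ~~ odd a.
Proof.
move=> hn /orP[/eqP <-|/eqP <-]; rewrite odd_mod_even //=; by case: odd.
Qed.

Lemma torus_adj_bip n m (hn : ~~ odd n) (hm : ~~ odd m) u v :
  torus_adj n m u v -> grid_col n m u != grid_col n m v.
Proof.
rewrite /torus_adj /grid_col => /orP[/andP[/eqP e h]|/andP[/eqP e h]];
  rewrite !oddD e.
- by rewrite (parity_step m _ _ hm h); case: (odd _); case: (odd _).
- by rewrite (parity_step n _ _ hn h); case: (odd _); case: (odd _).
Qed.

Lemma cyl_adj_bip n m (hn : ~~ odd n) u v :
  cyl_adj n m u v -> grid_col n m u != grid_col n m v.
Proof.
rewrite /cyl_adj /grid_col => /orP[/andP[/eqP e /orP[/eqP h|/eqP h]]|/andP[/eqP e h]];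
  rewrite !oddD e.
- by rewrite -h /=; case: (odd _); case: (odd _).
- by rewrite -h /=; case: (odd _); case: (odd _).
- by rewrite (parity_step n _ _ hn h); case: (odd _); case: (odd _).
Qed.

Definition torus (n m : nat) (hn : ~~ odd n) (hm : ~~ odd m) : position :=
  @Position ('I_n * 'I_m)%type (torus_adj n m) (@grid_col n m)
            (@torus_adj_sym n m) (@torus_adj_bip n m hn hm).

Definition cylinder (n m : nat) (hn : ~~ odd n) : position :=
  @Position ('I_n * 'I_m)%type (cyl_adj n m) (@grid_col n m)
            (@cyl_adj_sym n m) (@cyl_adj_bip n m hn).

(* Each grid G considered has an involutive automorphism s that swaps the two
   colours and never maps a vertex to a neighbour: a half-turn along a cycle of
   even length at least 4, combined with a reflection of the other coordinate
   when that half-turn preserves colours.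

   Moves at two non-adjacent vertices x, y of opposite colours do not interact:
   playing x then y leaves the intersection of the two one-move positions, and y
   is credited exactly as if x had not been played.  Hence in G + X the opponent
   can answer every move x in G by s x, which restores an s-symmetric position
   at no cost to either player, and by induction G + X has the value of X.  When
   X runs out first, the symmetric remainder of G must have value 0 whoever
   starts.  The mirror answers give Ls <= 0 <= Rs; the converse is Rs <= Ls for
   positions without isolated vertices (moving first is no disadvantage), which
   follows from: if no white vertex of U has a neighbour in S :\: U, then
   playing on S instead of U changes the value by at most #|S :\: U|. *)

From HB Require Import structures.
From mathcomp Require Import all_boot all_order all_algebra zify.
Import Order.TTheory GRing.Theory Num.Theory.
Set Implicit Arguments. Unset Strict Implicit. Unset Printing Implicit Defensive.

Section Extrema.
Local Open Scope ring_scope.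

Lemma maxl_ge (a : int) s x : x \in a :: s -> x <= maxl a s.
Proof.
elim: s x => [|y s IH] x /=; first by rewrite inE => /eqP ->.
rewrite le_max !inE => /or3P[/eqP->|/eqP->|h].
- by rewrite (IH a) ?orbT // mem_head.
- by rewrite lexx.
- by rewrite (IH x) ?orbT // inE h orbT.
Qed.

Lemma maxl_in (a : int) s : maxl a s \in a :: s.
Proof.
elim: s => [|y s IH] /=; first by rewrite inE.
rewrite /Order.max; case: ifP => _; last by rewrite !inE eqxx orbT.
by move: IH; rewrite !inE => /orP[->|->]; rewrite ?orbT.
Qed.

Lemma minl_le (a : int) s x : x \in a :: s -> minl a s <= x.
Proof.
elim: s x => [|y s IH] x /=; first by rewrite inE => /eqP ->.
rewrite ge_min !inE => /or3P[/eqP->|/eqP->|h].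
- by rewrite IH ?orbT // inE eqxx.
- by rewrite lexx.
- by rewrite IH ?inE ?h ?orbT.
Qed.

Lemma minl_in (a : int) s : minl a s \in a :: s.
Proof.
elim: s => [|y s IH] /=; first by rewrite inE.
rewrite /Order.min; case: ifP => _; first by rewrite !inE eqxx orbT.
by move: IH; rewrite !inE => /orP[->|->]; rewrite ?orbT.
Qed.

End Extrema.

Section Position.
Variable P : position.
Local Notation T := (pV P).
Local Notation adj := (padj P).
Local Notation col := (pcol P).
Local Open Scope ring_scope.

Definition cnbr (x z : T) : bool := (z == x) || adj x z.

Definition isofree (S : {set T}) : Prop :=
  forall x, x \in S -> exists2 y, y \in S & adj x y.

Lemma adj_col (x y : T) : adj x y -> col y = ~~ col x.
Proof. by move/padj_bip; case: (col x); case: (col y). Qed.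

Lemma in_cnbhd (S : {set T}) x z : (z \in cnbhd P S x) = (z \in S) && cnbr x z.
Proof. by rewrite inE. Qed.

Lemma isolatedP (S : {set T}) z :
  reflect (z \in S /\ forall w, w \in S -> ~~ adj z w) (z \in isolated P S).
Proof.
rewrite inE; apply: (iffP andP) => [[zS /forall_inP]|[zS /forall_inP]] //.
Qed.

Lemma in_after (S : {set T}) x z : (z \in after P S x) =
  [&& z \in S, ~~ cnbr x z & [exists w in S, ~~ cnbr x w && adj z w]].
Proof.
have inS1 w : (w \in S :\: cnbhd P S x) = (w \in S) && ~~ cnbr x w.
  by rewrite in_setD in_cnbhd andbC; case: (w \in S); rewrite ?andbT.
rewrite /after in_setD inS1.
case zS: (z \in S) => /=; last by rewrite andbF.
case: (boolP (cnbr x z)) => nzx; rewrite /= ?andbF ?andbT //.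
apply/negP/exists_inP => [nI|[w wS /andP[nw zw]] /isolatedP[_ I]].
  apply/exists_inP; apply: contra_notT nI => /exists_inPn H.
  apply/isolatedP; split=> [|w]; first by rewrite inS1 zS.
  by rewrite inS1 => /andP[wS nw]; have := H w wS; rewrite nw.
by have := I w; rewrite inS1 wS nw zw => /(_ isT).
Qed.

Lemma after_sub (S : {set T}) x : after P S x \subset S.
Proof. by apply/subsetP => z; rewrite in_after => /andP[]. Qed.

Lemma card_after (S : {set T}) x : x \in S -> (#|after P S x| < #|S|)%N.
Proof.
move=> xS; apply: proper_card; rewrite properEneq after_sub andbT.
by apply: contraTneq xS => <-; rewrite in_after /cnbr eqxx andbF.
Qed.

Lemma gain_card (S : {set T}) x : gain P S x = #|S|%:Z - #|after P S x|%:Z.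
Proof.
set S1 := S :\: cnbhd P S x.
have sub1 : cnbhd P S x \subset S by apply/subsetP => y; rewrite in_cnbhd => /andP[].
have sub2 : isolated P S1 \subset S1 by apply/subsetP => y /isolatedP[].
have e1 := cardsID (cnbhd P S x) S; rewrite (setIidPr sub1) in e1.
have e2 := cardsID (isolated P S1) S1; rewrite (setIidPr sub2) in e2.
rewrite /gain /after -/S1 -e1 -e2; lia.
Qed.

Lemma isolated_setTE u : (u \in isolated P setT) = [forall w, ~~ adj u w].
Proof.
apply/isolatedP/forallP => [[_ I] w|I]; first exact: I.
by split=> // w _; apply: I.
Qed.

Lemma isofree_setD_isolated (A : {set T}) : isofree (A :\: isolated P A).
Proof.
move=> z; rewrite in_setD => /andP[zI zA].
have [w wA zw] : exists2 w, w \in A & adj z w.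
  case: (boolP [exists w in A, adj z w]) => [/exists_inP[w]|/exists_inPn nw]; first by exists w.
  by case/negP: zI; apply/isolatedP.
exists w => //; rewrite in_setD wA andbT; apply/negP => /isolatedP[_ I].
by have := I z zA; rewrite padj_sym zw.
Qed.

Lemma isofree_after (S : {set T}) x : isofree (after P S x).
Proof. exact: isofree_setD_isolated. Qed.

Lemma isofree_col (S : {set T}) x t : isofree S -> x \in S -> exists2 y, y \in S & col y = t.
Proof.
move=> fS xS; case: (eqVneq (col x) t) => [<-|ne]; first by exists x.
have [y yS xy] := fS x xS; exists y => //; rewrite (adj_col xy).
by move: ne; case: (col x); case: t.
Qed.

Lemma nbr_notin_cnbr b z w : adj z w -> ~~ cnbr b z -> col b = ~~ col z -> ~~ cnbr b w.
Proof.
move=> zw nbz cb; rewrite /cnbr negb_or; apply/andP; split.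
  by apply: contraNneq nbz => wb; rewrite /cnbr -wb padj_sym zw orbT.
by apply/negP => /adj_col; rewrite (adj_col zw) cb; case: (col z).
Qed.

Lemma edge_in_after (S : {set T}) x z w : z \in S -> w \in S ->
  ~~ cnbr x z -> ~~ cnbr x w -> adj z w -> z \in after P S x.
Proof.
move=> zS wS nxz nxw zw; rewrite in_after zS nxz.
by apply/exists_inP; exists w; rewrite ?nxw.
Qed.

Lemma mem_after_far (S : {set T}) x z : isofree S -> z \in S ->
  (forall w, cnbr z w -> ~~ cnbr x w) -> z \in after P S x.
Proof.
move=> fS zS far; have [w wS zw] := fS z zS.
have [zz zw'] : cnbr z z /\ cnbr z w by rewrite /cnbr eqxx zw orbT.
exact: edge_in_after zS wS (far z zz) (far w zw') zw.
Qed.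

Lemma mem_after_opp (S : {set T}) b z : isofree S -> z \in S ->
  ~~ cnbr b z -> col b = ~~ col z -> z \in after P S b.
Proof.
move=> fS zS nbz cb; have [w wS zw] := fS z zS.
exact: edge_in_after zS wS nbz (nbr_notin_cnbr zw nbz cb) zw.
Qed.

Lemma after_subset (S U : {set T}) x : U \subset S -> after P U x \subset after P S x.
Proof.
move=> sub; apply/subsetP => z; rewrite in_after.
case/and3P=> zU nxz /exists_inP[w wU /andP[nxw zw]].
exact: edge_in_after (subsetP sub _ zU) (subsetP sub _ wU) nxz nxw zw.
Qed.

End Position.

Section IndependentMoves.
Variable P : position.
Local Notation T := (pV P).
Local Notation adj := (padj P).
Local Notation col := (pcol P).

Lemma after_after_opp (S : {set T}) x y : col y = ~~ col x ->
  after P (after P S x) y = after P S x :&: after P S y.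
Proof.
move=> cxy; apply/setP => z; rewrite in_setI; apply/idP/idP.
  rewrite in_after => /and3P[zx nyz /exists_inP[w wx /andP[nyw zw]]].
  have sub := subsetP (after_sub S x).
  by rewrite zx (edge_in_after (sub _ zx) (sub _ wx) nyz nyw zw).
case/andP=> zx; rewrite in_after => /and3P[zS nyz /exists_inP[w2 w2S /andP[nyw2 zw2]]].
move: (zx); rewrite in_after => /and3P[_ nxz /exists_inP[w1 w1S /andP[nxw1 zw1]]].
have [w [wS nxw nyw zw]] : exists w, [/\ w \in S, ~~ cnbr x w, ~~ cnbr y w & adj z w].
  case: (eqVneq (col z) (col x)) => czx.
    by exists w1; rewrite (nbr_notin_cnbr zw1 nyz) // cxy czx.
  by exists w2; rewrite (nbr_notin_cnbr zw2 nxz) //; move: czx; case: (col x); case: (col z).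
rewrite in_after zx nyz; apply/exists_inP; exists w; last by rewrite nyw.
by apply: edge_in_after wS zS nxw nxz _; rewrite padj_sym.
Qed.

Lemma mem_after_either (S : {set T}) x y z : col y = ~~ col x -> ~~ adj x y ->
  isofree S -> y \in S -> z \in S -> col z = col x ->
  (z \in after P S x) || (z \in after P S y).
Proof.
move=> cxy nxy fS yS zS czx; case: (boolP (cnbr y z)) => [/orP[/eqP zy|yz]|nyz].
- by move: czx; rewrite zy cxy; case: (col x).
- have nxz : ~~ cnbr x z.
    rewrite /cnbr negb_or; apply/andP; split.
      by apply: contraNneq nxy => zx; rewrite -zx padj_sym.
    by apply/negP => /adj_col; rewrite czx; case: (col x).
  have nxy' : ~~ cnbr x y.
    by rewrite /cnbr (negbTE nxy) orbF; apply/eqP => yx; move: cxy; rewrite yx; case: (col x).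
  by rewrite (edge_in_after zS yS nxz nxy') // padj_sym.
- by rewrite (mem_after_opp fS zS nyz) ?orbT // cxy czx.
Qed.

Lemma after_indep_cover (S : {set T}) x y : col y = ~~ col x -> ~~ adj x y ->
  isofree S -> x \in S -> y \in S -> after P S x :|: after P S y = S.
Proof.
move=> cxy nxy fS xS yS; apply/eqP; rewrite eqEsubset subUset !after_sub /=.
apply/subsetP => z zS; rewrite in_setU; case: (eqVneq (col z) (col x)) => czx.
  exact: mem_after_either.
rewrite orbC; apply: mem_after_either => //; first by rewrite cxy negbK.
- by rewrite padj_sym.
- by move: czx; rewrite cxy; case: (col x); case: (col z).
Qed.

Lemma mem_after_indep (S : {set T}) x y : col y = ~~ col x -> ~~ adj x y ->
  isofree S -> x \in S -> y \in S -> y \in after P S x.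
Proof.
move=> cxy nxy fS xS yS; move/setP/(_ y): (after_indep_cover cxy nxy fS xS yS).
by rewrite in_setU yS (in_after S y y) /cnbr eqxx andbF orbF.
Qed.

Lemma gain_after_indep (S : {set T}) x y : col y = ~~ col x -> ~~ adj x y ->
  isofree S -> x \in S -> y \in S -> gain P (after P S x) y = gain P S y.
Proof.
move=> cxy nxy fS xS yS; rewrite !gain_card (after_after_opp _ cxy).
have := cardsUI (after P S x) (after P S y).
rewrite (after_indep_cover cxy nxy fS xS yS); lia.
Qed.

End IndependentMoves.

Section GameValue.
Variable P : position.
Local Notation T := (pV P).
Local Notation adj := (padj P).
Local Notation col := (pcol P).
Local Open Scope ring_scope.

Definition moves t (S : {set T}) : seq T := [seq x <- enum S | col x == t].

Definition best (t : bool) (f : T -> int) (l : seq T) : int :=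
  if l is x0 :: xs then
    if t then maxl (f x0) (map f xs) else minl (f x0) (map f xs)
  else 0.

Lemma gvalS k t (S : {set T}) : gval P k.+1 t S =
  best t (fun x => if t then gain P S x + gval P k false (after P S x)
                   else - gain P S x + gval P k true (after P S x)) (moves t S).
Proof. by []. Qed.

Lemma mem_moves t (S : {set T}) x : (x \in moves t S) = (x \in S) && (col x == t).
Proof. by rewrite mem_filter mem_enum andbC. Qed.

Lemma best_eq_in t f g l : {in l, f =1 g} -> best t f l = best t g l.
Proof.
case: l => [|x0 xs] //= fg; rewrite fg ?mem_head //.
have -> // : map f xs = map g xs.
by apply/eq_in_map => y ys; apply: fg; rewrite inE ys orbT.
Qed.

Lemma best_ge f l x : x \in l -> f x <= best true f l.
Proof. by case: l => [|x0 xs] // xl; apply: maxl_ge; rewrite -map_cons map_f. Qed.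

Lemma best_le f l x : x \in l -> best false f l <= f x.
Proof. by case: l => [|x0 xs] // xl; apply: minl_le; rewrite -map_cons map_f. Qed.

Lemma best_attained t f l : l != [::] -> exists2 x, x \in l & best t f l = f x.
Proof.
case: l => [|x0 xs] // _.
have: best t f (x0 :: xs) \in map f (x0 :: xs) by case: t; [apply: maxl_in | apply: minl_in].
by case/mapP => x xl ->; exists x.
Qed.

Lemma gval_fuel_eq k k' t (S : {set T}) :
  (#|S| <= k)%N -> (#|S| <= k')%N -> gval P k t S = gval P k' t S.
Proof.
elim: k k' t S => [|k IH] [|k'] t S //; rewrite ?leqn0 => hk hk'.
- by rewrite (cards0_eq (eqP hk)) /= /moves enum_set0.
- by rewrite (cards0_eq (eqP hk')) /= enum_set0.
rewrite !gvalS; apply: best_eq_in => x; rewrite mem_moves => /andP[xS _].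
have lt := card_after xS.
by rewrite (IH k' false) ?(IH k' true) // -ltnS (leq_trans lt).
Qed.

Definition value t (S : {set T}) : int := gval P #|S| t S.

Lemma gval_fuel k t (S : {set T}) : (#|S| <= k)%N -> gval P k t S = value t S.
Proof. by move=> hk; apply: gval_fuel_eq. Qed.

Definition outcome t (S : {set T}) x : int :=
  if t then gain P S x + value false (after P S x)
  else - gain P S x + value true (after P S x).

Lemma value_step t (S : {set T}) x0 : x0 \in S ->
  value t S = best t (outcome t S) (moves t S).
Proof.
move=> x0S; rewrite /value; case E: #|S| (card_after x0S) => [|k] // _.
rewrite gvalS; apply: best_eq_in => x; rewrite mem_moves => /andP[xS _].
have := card_after xS; rewrite E ltnS => le.
by rewrite /outcome !(gval_fuel _ le).
Qed.

Lemma outcome_le_value (S : {set T}) x : x \in S -> col x -> outcome true S x <= value true S.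
Proof. by move=> xS cx; rewrite (value_step _ xS) best_ge // mem_moves xS cx. Qed.

Lemma value_le_outcome (S : {set T}) x :
  x \in S -> ~~ col x -> value false S <= outcome false S x.
Proof. by move=> xS cx; rewrite (value_step _ xS) best_le // mem_moves xS eqbF_neg. Qed.

Lemma value_attained t (S : {set T}) x0 : x0 \in S -> col x0 = t ->
  exists x, [/\ x \in S, col x = t & value t S = outcome t S x].
Proof.
move=> x0S cx0; rewrite (value_step _ x0S).
have [|x] := @best_attained t (outcome t S) (moves t S).
  by apply: contraTneq (_ : x0 \in moves t S) => [->|]; rewrite ?mem_moves ?x0S ?cx0 ?eqxx.
by rewrite mem_moves => /andP[xS /eqP cx] ->; exists x.
Qed.

Lemma value_no_move t (S : {set T}) : (forall x, x \in S -> col x != t) -> value t S = 0.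
Proof.
move=> nomove; rewrite /value; case: #|S| => [|k] //; rewrite gvalS.
case E: (moves t S) => [|x xs] //.
have := mem_head x xs; rewrite -E mem_moves => /andP[xS].
by rewrite (negbTE (nomove x xS)).
Qed.

Lemma value_set0 t : value t set0 = 0.
Proof. by apply: value_no_move => x; rewrite inE. Qed.

Lemma value_cases t (S : {set T}) :
  value t S = 0 \/ exists x, [/\ x \in S, col x = t & value t S = outcome t S x].
Proof.
case: (pickP [pred x | (x \in S) && (col x == t)]) => [x /andP[xS /eqP cx]|nomove].
  by right; apply: value_attained xS cx.
by left; apply: value_no_move => x xS; apply: contraFN (nomove x); rewrite /= xS.
Qed.

Lemma value_le_card t (S : {set T}) : value t S <= #|S|%:Z.
Proof.
have [k] := ubnP #|S|; elim: k t S => // k IH t S /ltnSE hk.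
case: (value_cases t S) => [->|[x [xS _ ->]]] //.
have hx := leq_trans (card_after xS) hk; have := subset_leq_card (after_sub S x).
rewrite /outcome gain_card; case: t.
  by have := IH false _ hx; lia.
by have := IH true _ hx; lia.
Qed.

End GameValue.

Section FirstMove.
Variable P : position.
Local Notation T := (pV P).
Local Notation adj := (padj P).
Local Notation col := (pcol P).
Local Open Scope ring_scope.

Definition white_sealed (S U : {set T}) : Prop :=
  forall z w, z \in U -> ~~ col z -> w \in S -> w \notin U -> ~~ adj z w.

Lemma white_sealedS (S S' U : {set T}) :
  S' \subset S -> white_sealed S U -> white_sealed S' U.
Proof. by move=> sub seal z w zU cz wS'; apply: seal => //; apply: (subsetP sub). Qed.

Lemma white_sealed_after (S U : {set T}) x : U \subset S -> white_sealed S U ->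
  white_sealed (after P S x) (after P U x).
Proof.
move=> sub seal z w zUx cz wSx wUx; case: (boolP (w \in U)) => wU; last first.
  by apply: seal wU => //; [apply: (subsetP (after_sub U x)) | apply: (subsetP (after_sub S x))].
move: zUx wSx; rewrite !in_after => /and3P[zU nxz _] /and3P[_ nxw _].
by apply: contraNN wUx => zw; apply: edge_in_after wU zU nxw nxz _; rewrite padj_sym.
Qed.

Lemma white_sealed_after_black (U : {set T}) x : col x -> white_sealed U (after P U x).
Proof.
move=> cx z w zUx cz wU; apply: contraNN => zw.
move: zUx; rewrite in_after => /and3P[zU nxz _].
have nxw : ~~ cnbr x w by apply: nbr_notin_cnbr zw nxz _; rewrite cx (negbTE cz).
by apply: edge_in_after wU zU nxw nxz _; rewrite padj_sym.
Qed.

Lemma subset_after_black_out (S U : {set T}) x : U \subset S -> isofree U ->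
  white_sealed S U -> x \in S -> x \notin U -> col x -> U \subset after P S x.
Proof.
move=> sub fU seal xS xU cx.
have nx z : z \in U -> ~~ cnbr x z.
  move=> zU; rewrite /cnbr negb_or; apply/andP; split; first by apply: contraNneq xU => <-.
  apply/negP => xz; have cz : ~~ col z by rewrite (adj_col xz) cx.
  by have := seal z x zU cz xS xU; rewrite padj_sym xz.
apply/subsetP => z zU; have [w wU zw] := fU z zU.
exact: edge_in_after (subsetP sub _ zU) (subsetP sub _ wU) (nx z zU) (nx w wU) zw.
Qed.

Lemma after_white_in (S U : {set T}) y : U \subset S -> isofree U -> white_sealed S U ->
  y \in U -> ~~ col y -> after P U y = U :&: after P S y.
Proof.
move=> sub fU seal yU cy; apply/setP => z; rewrite in_setI.
apply/idP/andP => [zUy|[zU]].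
  by rewrite (subsetP (after_sub U y)) ?(subsetP (after_subset y sub)).
rewrite in_after => /and3P[_ nyz /exists_inP[w wS /andP[nyw zw]]].
case: (boolP (col z)) => cz.
  have [w' w'U zw'] := fU z zU.
  by apply: edge_in_after zU w'U nyz (nbr_notin_cnbr zw' nyz _) zw'; rewrite cz (negbTE cy).
have wU : w \in U by apply: contraTT zw => wU; apply: seal.
exact: edge_in_after zU wU nyz nyw zw.
Qed.

Section Domination.
Variable n : nat.
Hypothesis value_sub_le_n : forall t (S U : {set T}), (#|S| <= n)%N ->
  U \subset S -> isofree S -> isofree U -> white_sealed S U ->
  value t S <= #|S|%:Z - #|U|%:Z + value t U.

Lemma value_false_le_true_n (U : {set T}) :
  (#|U| <= n)%N -> isofree U -> value false U <= value true U.
Proof.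
move=> hU fU; have [->|[u uU]] := set_0Vmem U; first by rewrite !value_set0.
have [x xU cx] := isofree_col true fU uU.
have := outcome_le_value xU cx.
have := value_sub_le_n false hU (after_sub U x) fU (@isofree_after _ U x)
  (white_sealed_after_black (U := U) cx).
have := subset_leq_card (after_sub U x); rewrite /outcome gain_card; lia.
Qed.

Lemma value_sub_le_true (S U : {set T}) : (#|S| <= n.+1)%N ->
  U \subset S -> isofree S -> isofree U -> white_sealed S U ->
  value true S <= #|S|%:Z - #|U|%:Z + value true U.
Proof.
move=> hS sub fS fU seal; have [S0|[s sS]] := set_0Vmem S.
  by move: sub; rewrite S0 subset0 => /eqP->; rewrite !value_set0 cards0.
have [y yS cy] := isofree_col true fS sS.
have [x [xS cx ->]] := value_attained yS cy.
have hSx : (#|after P S x| <= n)%N by rewrite -ltnS (leq_trans (card_after xS)).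
have := subset_leq_card (after_sub S x); rewrite /outcome gain_card.
case: (boolP (x \in U)) => xU.
  have := value_sub_le_n false hSx (after_subset x sub) (@isofree_after _ S x)
    (@isofree_after _ U x) (white_sealed_after (x := x) sub seal).
  by have := outcome_le_value xU cx; rewrite /outcome gain_card; lia.
(* Left's move outside U leaves U intact, so on U it amounts to a pass. *)
have subx := subset_after_black_out sub fU seal xS xU cx.
have := value_sub_le_n false hSx subx (@isofree_after _ S x) fU
  (white_sealedS (after_sub S x) seal).
by have := value_false_le_true_n (leq_trans (subset_leq_card subx) hSx) fU; lia.
Qed.

Lemma value_sub_le_false (S U : {set T}) : (#|S| <= n.+1)%N ->
  U \subset S -> isofree S -> isofree U -> white_sealed S U ->
  value false S <= #|S|%:Z - #|U|%:Z + value false U.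
Proof.
move=> hS sub fS fU seal; have [U0|[u uU]] := set_0Vmem U.
  by rewrite U0 value_set0 cards0; have := value_le_card false S; lia.
have [v vU cv] := isofree_col false fU uU.
have [y [yU cy ->]] := value_attained vU cv.
have yS := subsetP sub _ yU; have ncy : ~~ col y by rewrite cy.
have hSy : (#|after P S y| <= n)%N by rewrite -ltnS (leq_trans (card_after yS)).
have := value_le_outcome yS ncy.
have := value_sub_le_n true hSy (after_subset y sub) (@isofree_after _ S y)
  (@isofree_after _ U y) (white_sealed_after (x := y) sub seal).
have := cardsUI U (after P S y); rewrite -(after_white_in sub fU seal yU ncy).
have : (#|U :|: after P S y| <= #|S|)%N by rewrite subset_leq_card // subUset sub after_sub.
rewrite /outcome !gain_card; lia.
Qed.

End Domination.

Lemma value_sub_le t (S U : {set T}) : U \subset S -> isofree S -> isofree U ->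
  white_sealed S U -> value t S <= #|S|%:Z - #|U|%:Z + value t U.
Proof.
have [k] := ubnP #|S|; elim: k t S U => // k IH t S U /ltnSE hk.
case: k hk IH => [|k] hk IH.
  have S0 : S = set0 by apply/cards0_eq/eqP; rewrite -leqn0.
  by rewrite S0 subset0 => /eqP->; rewrite !value_set0 cards0.
have IH' t' (S' U' : {set T}) : (#|S'| <= k)%N -> U' \subset S' ->
    isofree S' -> isofree U' -> white_sealed S' U' ->
    value t' S' <= #|S'|%:Z - #|U'|%:Z + value t' U'.
  by move=> h; apply: IH; rewrite ltnS.
by case: t; [exact: (value_sub_le_true IH' hk) | exact: (value_sub_le_false IH' hk)].
Qed.

Lemma value_false_le_true (U : {set T}) : isofree U -> value false U <= value true U.
Proof.
by apply: (@value_false_le_true_n #|U|) => // t S U' _; apply: value_sub_le.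
Qed.

End FirstMove.

Section Mirror.
Variable P : position.
Local Notation T := (pV P).
Local Notation adj := (padj P).
Local Notation col := (pcol P).

Section Automorphism.
Variable f : T -> T.
Hypotheses (f_bij : bijective f) (f_adj : forall u v, adj (f u) (f v) = adj u v).

Lemma cnbr_morph x z : cnbr (f x) (f z) = cnbr x z.
Proof. by rewrite /cnbr (inj_eq (bij_inj f_bij)) f_adj. Qed.

Lemma after_preimset (A : {set T}) x : after P (f @^-1: A) x = f @^-1: after P A (f x).
Proof.
have [g fK gK] := f_bij.
apply/setP => z; rewrite [in RHS]inE !in_after !inE cnbr_morph; congr (_ && (_ && _)).
apply/exists_inP/exists_inP => [[w wA /andP[nw zw]]|[w wA /andP[nw zw]]].
  by exists (f w); [rewrite inE in wA | rewrite cnbr_morph f_adj nw].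
by exists (g w); [rewrite inE gK | rewrite -cnbr_morph -f_adj gK nw].
Qed.

Lemma gain_preimset (A : {set T}) x : gain P (f @^-1: A) x = gain P A (f x).
Proof. by rewrite !gain_card after_preimset !card_preimset //; apply: bij_inj. Qed.

Lemma isolated_setT_preimset : f @^-1: isolated P setT = isolated P setT.
Proof.
have [g fK gK] := f_bij.
apply/setP => u; rewrite inE !isolated_setTE; apply/forallP/forallP => I w.
  by rewrite -f_adj I.
by rewrite -[w]gK f_adj I.
Qed.

End Automorphism.

Lemma mirror_reply (s : T -> T) (S : {set T}) x :
  involutive s -> (forall u v, adj (s u) (s v) = adj u v) ->
  isofree S -> s @^-1: S = S -> x \in S -> col (s x) = ~~ col x -> ~~ adj x (s x) ->
  [/\ s x \in after P S x, gain P (after P S x) (s x) = gain P S x &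
      s @^-1: after P (after P S x) (s x) = after P (after P S x) (s x)].
Proof.
move=> sK sadj fS sS xS csx nadj; have sb := inv_bij sK.
have sxS : s x \in S by rewrite -sS inE sK.
split; first exact: mem_after_indep.
  by rewrite gain_after_indep // -{2}sS gain_preimset.
have e y : s @^-1: after P S (s y) = after P S y by rewrite -after_preimset // sS.
by have := e (s x); rewrite sK => e'; rewrite after_after_opp // preimsetI e' e setIC.
Qed.

End Mirror.

Section Sum.
Variables G X : position.
Local Notation P := (psum G X).
Local Notation TP := (pV (psum G X)).

Definition prG (S : {set TP}) : {set pV G} := inl @^-1: S.
Definition prX (S : {set TP}) : {set pV X} := inr @^-1: S.

Lemma card_sum (S : {set TP}) : #|S| = (#|prG S| + #|prX S|)%N.
Proof.
rewrite -!sum1_card big_sumType /=.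
by congr (_ + _)%N; apply: eq_bigl => a; rewrite inE.
Qed.

Lemma mem_prG (S : {set TP}) a : (a \in prG S) = (inl a \in S).
Proof. by rewrite inE. Qed.

Lemma mem_prX (S : {set TP}) b : (b \in prX S) = (inr b \in S).
Proof. by rewrite inE. Qed.

Lemma prX_set0 : prX set0 = set0.
Proof. by apply/setP => b; rewrite !inE. Qed.

Lemma isofree_prX (S : {set TP}) : isofree S -> isofree (prX S).
Proof.
move=> fS b; rewrite inE => bS; have [[a|c] cS bc] := fS _ bS => //.
by exists c; rewrite ?inE.
Qed.

Lemma prX_after_inr (S : {set TP}) y : prX (after P S (inr y)) = after X (prX S) y.
Proof.
apply/setP => b; rewrite mem_prX (in_after S (inr y)) in_after mem_prX.
congr (_ && (_ && _)).
apply/exists_inP/exists_inP => [[[a|c] cS /andP[nc bc]] //|[c cS /andP[nc bc]]].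
  by exists c; rewrite ?mem_prX ?nc.
by exists (inr c); rewrite -?mem_prX ?nc.
Qed.

Lemma prG_after_inr (S : {set TP}) y : isofree S -> prG (after P S (inr y)) = prG S.
Proof.
move=> fS; apply/setP => a; rewrite !mem_prG; apply/idP/idP => [|aS].
  exact: (subsetP (after_sub S (inr y))).
by apply: mem_after_far => // -[c|c].
Qed.

Lemma prX_after_inl (S : {set TP}) x : isofree S -> prX (after P S (inl x)) = prX S.
Proof.
move=> fS; apply/setP => b; rewrite !mem_prX; apply/idP/idP => [|bS].
  exact: (subsetP (after_sub S (inl x))).
by apply: mem_after_far => // -[c|c].
Qed.

Lemma isolated_sum_inl a : (inl a \in isolated P setT) = (a \in isolated G setT).
Proof.
rewrite (@isolated_setTE P) isolated_setTE.
by apply/forallP/forallP => [I c|I [c|c]] //; [exact: I (inl c) | exact: I c].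
Qed.

Lemma isolated_sum_inr b : (inr b \in isolated P setT) = (b \in isolated X setT).
Proof.
rewrite (@isolated_setTE P) isolated_setTE.
by apply/forallP/forallP => [I c|I [c|c]] //; [exact: I (inr c) | exact: I c].
Qed.

Lemma prX_nonisolated : prX (setT :\: isolated P setT) = setT :\: isolated X setT.
Proof. by apply/setP => b; rewrite mem_prX !in_setD isolated_sum_inr !in_setT. Qed.

Lemma init_score_sum : isolated G setT = set0 -> init_score P = init_score X.
Proof.
move=> noiso; rewrite /init_score big_sumType /= big_pred0 ?add0r => [|a].
  by apply: eq_bigl => b; rewrite isolated_sum_inr.
by rewrite isolated_sum_inl noiso inE.
Qed.

Lemma gain_inr (S : {set TP}) y : isofree S -> gain P S (inr y) = gain X (prX S) y.
Proof.
move=> fS; rewrite !gain_card (card_sum S) (card_sum (after P S (inr y))).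
by rewrite prX_after_inr prG_after_inr //; lia.
Qed.

End Sum.

Section MirrorSum.
Local Open Scope ring_scope.
Variables (G X : position) (s : pV G -> pV G).
Hypotheses (sK : involutive s) (sadj : forall a b, padj G (s a) (s b) = padj G a b)
  (scol : forall a, pcol G (s a) = ~~ pcol G a) (snadj : forall a, ~~ padj G a (s a)).
Local Notation P := (psum G X).
Local Notation TP := (pV (psum G X)).

Definition sum_mirror (u : TP) : TP := if u is inl a then inl (s a) else u.
Local Notation sg := sum_mirror.

Lemma sum_mirrorK : involutive sg.
Proof. by case=> [a|b] //=; rewrite sK. Qed.

Lemma sum_mirror_adj u v : padj P (sg u) (sg v) = padj P u v.
Proof. by case: u => [a|b]; case: v => [c|d] //=; apply: sadj. Qed.

Section InductionStep.
Variable S : {set TP}.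
Hypotheses (fS : isofree S) (sS : sg @^-1: S = S).
Hypothesis IH : forall S' : {set TP}, (#|S'| < #|S|)%N -> isofree S' -> sg @^-1: S' = S' ->
  forall t, value t S' = value t (prX S').

Lemma outcome_inr t b : inr b \in S -> outcome t S (inr b) = outcome t (prX S) b.
Proof.
move=> bS; have := after_preimset (inv_bij sum_mirrorK) sum_mirror_adj S (inr b).
rewrite sS /= => /esym sSb.
have E t' : value t' (after P S (inr b)) = value t' (after X (prX S) b).
  by rewrite (IH (card_after bS) (@isofree_after _ _ _) sSb) prX_after_inr.
by rewrite /outcome gain_inr // !E.
Qed.

Lemma value_reply_inl t a : inl a \in S ->
  value t (after P (after P S (inl a)) (sg (inl a))) = value t (prX S).
Proof.
move=> aS; have [m1 _ m3] := mirror_reply sum_mirrorK sum_mirror_adj fS sS aS (scol a) (snadj a).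
rewrite IH ?(ltn_trans (card_after m1) (card_after aS)) //; last exact: isofree_after.
by rewrite !prX_after_inl //; exact: isofree_after.
Qed.

Lemma value_true_le_prX : value true S <= value true (prX S).
Proof.
have [S0|[z zS]] := set_0Vmem S; first by rewrite S0 prX_set0 !value_set0.
have [y yS cy] := isofree_col true fS zS.
have [[a|b] [uS cu ->]] := value_attained yS cy.
  (* Right answers inl a by its mirror image. *)
  have [m1 m2 _] := mirror_reply sum_mirrorK sum_mirror_adj fS sS uS (scol a) (snadj a).
  have ncol : ~~ pcol P (sg (inl a)) by move: cu => /= cu; rewrite scol cu.
  have := value_le_outcome m1 ncol.
  by rewrite /outcome m2 value_reply_inl //; lia.
by rewrite outcome_inr // outcome_le_value ?mem_prX.
Qed.

Lemma value_prX_false_le : value false (prX S) <= value false S.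
Proof.
have [S0|[z zS]] := set_0Vmem S; first by rewrite S0 prX_set0 !value_set0.
have [y yS cy] := isofree_col false fS zS.
have [[a|b] [uS cu ->]] := value_attained yS cy.
  have [m1 m2 _] := mirror_reply sum_mirrorK sum_mirror_adj fS sS uS (scol a) (snadj a).
  have ccol : pcol P (sg (inl a)) by move: cu => /= cu; rewrite scol cu.
  have := outcome_le_value m1 ccol.
  by rewrite /outcome m2 value_reply_inl //; lia.
by move/negbT: cu => cu; rewrite outcome_inr // value_le_outcome ?mem_prX.
Qed.

Lemma value_prX_true_le : value true (prX S) <= value true S.
Proof.
have [X0|[b bS]] := set_0Vmem (prX S).
  (* Here 0 <= Rs <= Ls on the symmetric remainder of G. *)
  apply: le_trans (value_false_le_true fS).
  by have := value_prX_false_le; rewrite X0 !value_set0.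
have [b' b'S cb] := isofree_col true (isofree_prX fS) bS.
have [c [cS cc ->]] := value_attained b'S cb.
have cS' : inr c \in S by rewrite -mem_prX.
by rewrite -outcome_inr // outcome_le_value.
Qed.

Lemma value_false_le_prX : value false S <= value false (prX S).
Proof.
have [X0|[b bS]] := set_0Vmem (prX S).
  apply: le_trans (value_false_le_true fS) _.
  by have := value_true_le_prX; rewrite X0 !value_set0.
have [b' b'S cb] := isofree_col false (isofree_prX fS) bS.
have [c [cS cc ->]] := value_attained b'S cb.
have cS' : inr c \in S by rewrite -mem_prX.
by rewrite -outcome_inr // value_le_outcome //; apply/negbT.
Qed.

End InductionStep.

Lemma value_sum_mirror t (S : {set TP}) : isofree S -> sg @^-1: S = S ->
  value t S = value t (prX S).
Proof.
have [k] := ubnP #|S|; elim: k t S => // k IH t S /ltnSE hk fS sS.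
have IH' (S' : {set TP}) : (#|S'| < #|S|)%N -> isofree S' -> sg @^-1: S' = S' ->
    forall t', value t' S' = value t' (prX S').
  by move=> lt fS' sS' t'; apply: IH => //; exact: leq_trans lt hk.
apply/eqP; rewrite eq_le; case: t.
  by rewrite value_true_le_prX // value_prX_true_le.
by rewrite value_false_le_prX // value_prX_false_le.
Qed.

End MirrorSum.

Theorem is_zero_of_mirror (G : position) (s : pV G -> pV G) :
  involutive s -> (forall a b, padj G (s a) (s b) = padj G a b) ->
  (forall a, pcol G (s a) = ~~ pcol G a) -> (forall a, ~~ padj G a (s a)) ->
  (forall a, exists b, padj G a b) -> is_zero G.
Proof.
move=> sK sadj scol snadj nbG X.
have noiso : isolated G setT = set0.
  apply/setP => a; rewrite isolated_setTE inE; have [b ab] := nbG a.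
  by apply/forallP => /(_ b); rewrite ab.
have sS0 : sum_mirror s @^-1: (setT :\: isolated (psum G X) setT) =
             setT :\: isolated _ setT.
  rewrite preimsetD preimsetT isolated_setT_preimset //.
  - exact: inv_bij (sum_mirrorK sK).
  - exact: sum_mirror_adj.
rewrite /Ls /Rs init_score_sum // !(gval_fuel _ (max_card _)).
have fS0 := @isofree_setD_isolated (psum G X) setT.
by rewrite !(value_sum_mirror sK sadj scol snadj _ fS0 sS0) prX_nonisolated.
Qed.

Lemma cyc_adjE k (a b : 'I_k) : ((a.+1 %% k == b) || (b.+1 %% k == a))%N =
  [|| a.+1 == b, b.+1 == a, (a.+1 == k) && (b == 0 :> nat) | (b.+1 == k) && (a == 0 :> nat)]%N.
Proof.
have succ_mod x : (x < k)%N -> x.+1 %% k = if x.+1 == k then 0%N else x.+1.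
  by move=> xk; case: ifP => [/eqP ->|xk']; rewrite ?modnn // modn_small // ltn_neqAle xk' xk.
have := ltn_ord a; have := ltn_ord b.
by rewrite (succ_mod a) // (succ_mod b) //; case: ifP => h1; case: ifP => h2; lia.
Qed.

Definition cyc_succ n m (n_gt0 : (0 < n)%N) (u : 'I_n * 'I_m) : 'I_n * 'I_m :=
  (Ordinal (ltn_pmod u.1.+1 n_gt0), u.2).

Lemma torus_adj_succ n m n_gt0 (u : 'I_n * 'I_m) : torus_adj n m u (cyc_succ n_gt0 u).
Proof. by rewrite /torus_adj /= !eqxx !orbT. Qed.

Lemma cyl_adj_succ n m n_gt0 (u : 'I_n * 'I_m) : cyl_adj n m u (cyc_succ n_gt0 u).
Proof. by rewrite /cyl_adj /= !eqxx !orbT. Qed.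

Section GridMirror.
Variables n m : nat.
Hypotheses (n_gt0 : (0 < n)%N) (n_even : ~~ odd n).

Lemma half_double : n = (n./2 + n./2)%N.
Proof. by rewrite addnn even_halfK. Qed.

Definition half_turn (a : 'I_n) : 'I_n := Ordinal (ltn_pmod (a + n./2) n_gt0).

Lemma half_turnE (a : 'I_n) : (a < n./2)%N /\ half_turn a = (a + n./2)%N :> nat \/
  (n./2 <= a)%N /\ half_turn a = (a - n./2)%N :> nat.
Proof.
have := ltn_ord a; have := half_double; rewrite /half_turn /=.
case: (ltnP a n./2) => ah an nE; [left|right]; split => //; first by rewrite modn_small; lia.
by rewrite (_ : a + n./2 = a - n./2 + n)%N ?modnDr ?modn_small //; lia.
Qed.

(* When n./2 is even the half-turn preserves colours; reversing the second
   coordinate then swaps them, provided m is even. *)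
Definition flip (b : 'I_m) : 'I_m := if odd n./2 then b else rev_ord b.

Definition grid_mirror (u : 'I_n * 'I_m) : 'I_n * 'I_m := (half_turn u.1, flip u.2).

Lemma grid_mirrorK : involutive grid_mirror.
Proof.
case=> a b; rewrite /grid_mirror /=; congr (_, _).
  apply: ord_inj; have := half_turnE a; have := half_turnE (half_turn a).
  by have := half_double; have := ltn_ord a; lia.
by rewrite /flip; case: (odd n./2) => //; apply: rev_ordK.
Qed.

Lemma half_turn_eq (a b : 'I_n) : (half_turn a == half_turn b :> nat) = (a == b :> nat).
Proof.
have := half_turnE a; have := half_turnE b; have := half_double.
have := ltn_ord a; have := ltn_ord b; lia.
Qed.

Lemma half_turn_cyc (a b : 'I_n) :
  (((half_turn a).+1 %% n == half_turn b) || ((half_turn b).+1 %% n == half_turn a))%N =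
  ((a.+1 %% n == b) || (b.+1 %% n == a))%N.
Proof.
rewrite !cyc_adjE; have := half_turnE a; have := half_turnE b; have := half_double.
have := ltn_ord a; have := ltn_ord b; lia.
Qed.

Lemma flip_eq (a b : 'I_m) : (flip a == flip b :> nat) = (a == b :> nat).
Proof. by rewrite /flip; case: ifP => _ //=; have := ltn_ord a; have := ltn_ord b; lia. Qed.

Lemma flip_cyc (a b : 'I_m) :
  (((flip a).+1 %% m == flip b) || ((flip b).+1 %% m == flip a))%N =
  ((a.+1 %% m == b) || (b.+1 %% m == a))%N.
Proof.
rewrite !cyc_adjE /flip; case: ifP => _ //=.
by have := ltn_ord a; have := ltn_ord b; lia.
Qed.

Lemma flip_path (a b : 'I_m) :
  ((flip a).+1 == flip b :> nat) || ((flip b).+1 == flip a :> nat) =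
  (a.+1 == b :> nat) || (b.+1 == a :> nat).
Proof. by rewrite /flip; case: ifP => _ //=; have := ltn_ord a; have := ltn_ord b; lia. Qed.

Lemma torus_adj_mirror u v :
  torus_adj n m (grid_mirror u) (grid_mirror v) = torus_adj n m u v.
Proof. by rewrite /torus_adj /= half_turn_eq flip_eq half_turn_cyc flip_cyc. Qed.

Lemma cyl_adj_mirror u v : cyl_adj n m (grid_mirror u) (grid_mirror v) = cyl_adj n m u v.
Proof. by rewrite /cyl_adj /= half_turn_eq flip_eq half_turn_cyc flip_path. Qed.

Lemma grid_col_mirror u : odd n./2 || ~~ odd m ->
  grid_col n m (grid_mirror u) = ~~ grid_col n m u.
Proof.
case: u => a b; rewrite /grid_col /grid_mirror /flip /= negbK => par.
have := half_turnE a; have := half_double; have := ltn_ord a; have := ltn_ord b.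
by move: par; case: ifP => /=; lia.
Qed.

Hypothesis n_ge4 : (4 <= n)%N.

Lemma half_turn_far (a : 'I_n) : (a == half_turn a :> nat) = false /\
  ((a.+1 %% n == half_turn a) || ((half_turn a).+1 %% n == a))%N = false.
Proof.
rewrite cyc_adjE; have := half_turnE a; have := half_double; have := ltn_ord a.
split; lia.
Qed.

Lemma torus_adj_mirror_far u : ~~ torus_adj n m u (grid_mirror u).
Proof.
by case: u => a b; rewrite /torus_adj /=; have [-> ->] := half_turn_far a; rewrite andbF.
Qed.

Lemma cyl_adj_mirror_far u : ~~ cyl_adj n m u (grid_mirror u).
Proof.
by case: u => a b; rewrite /cyl_adj /=; have [-> ->] := half_turn_far a; rewrite andbF.
Qed.

End GridMirror.

Definition transpose k l (u : 'I_k * 'I_l) : 'I_l * 'I_k := (u.2, u.1).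

Lemma transposeK k l (u : 'I_k * 'I_l) : transpose (transpose u) = u.
Proof. by case: u. Qed.

Lemma torus_adj_transpose k l (u v : 'I_k * 'I_l) :
  torus_adj l k (transpose u) (transpose v) = torus_adj k l u v.
Proof. by rewrite /torus_adj orbC. Qed.

Lemma grid_col_transpose k l (u : 'I_k * 'I_l) : grid_col l k (transpose u) = grid_col k l u.
Proof. by rewrite /grid_col addnC. Qed.

Lemma torus_is_zero_wide n m (hn : ~~ odd n) (hm : ~~ odd m) :
  (0 < n)%N -> (4 <= n)%N -> is_zero (torus n m hn hm).
Proof.
move=> n_gt0 n_ge4.
apply: (@is_zero_of_mirror (torus n m hn hm) (@grid_mirror n m n_gt0)).
- exact: grid_mirrorK.
- exact: torus_adj_mirror.
- by move=> u; apply: grid_col_mirror => //; rewrite hm orbT.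
- exact: torus_adj_mirror_far.
- by move=> u; exists (cyc_succ n_gt0 u); apply: torus_adj_succ.
Qed.

Lemma torus_is_zero_tall n m (hn : ~~ odd n) (hm : ~~ odd m) :
  (0 < m)%N -> (4 <= m)%N -> is_zero (torus n m hn hm).
Proof.
move=> m_gt0 m_ge4.
apply: (@is_zero_of_mirror (torus n m hn hm)
  (fun u => transpose (@grid_mirror m n m_gt0 (transpose u)))).
- by move=> u /=; rewrite transposeK grid_mirrorK ?transposeK.
- by move=> u v /=; rewrite torus_adj_transpose torus_adj_mirror ?torus_adj_transpose.
- by move=> u /=; rewrite grid_col_transpose grid_col_mirror ?grid_col_transpose ?hn ?orbT.
- move=> u /=; rewrite -[u in torus_adj _ _ u]transposeK torus_adj_transpose.
  exact: torus_adj_mirror_far.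
- move=> u; exists (transpose (cyc_succ m_gt0 (transpose u))).
  by rewrite /= -torus_adj_transpose transposeK torus_adj_succ.
Qed.

Lemma cylinder_is_zero n m (hn : ~~ odd n) : (0 < n)%N -> (4 <= n)%N ->
  odd n./2 || ~~ odd m -> is_zero (cylinder n m hn).
Proof.
move=> n_gt0 n_ge4 hpar.
apply: (@is_zero_of_mirror (cylinder n m hn) (@grid_mirror n m n_gt0)).
- exact: grid_mirrorK.
- exact: cyl_adj_mirror.
- by move=> u; apply: grid_col_mirror.
- exact: cyl_adj_mirror_far.
- by move=> u; exists (cyc_succ n_gt0 u); apply: cyl_adj_succ.
Qed.

Theorem mainTheorem12 :
  (forall (n m : nat) (hn : ~~ odd n) (hm : ~~ odd m),
      (0 < n)%N -> (0 < m)%N -> (4 <= n)%N \/ (4 <= m)%N ->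
      is_zero (torus n m hn hm))
  /\
  (forall (n m : nat) (hn : ~~ odd n),
      (0 < n)%N -> (0 < m)%N ->
      ((4 <= n)%N /\ ~~ odd m) \/ (exists k : nat, (0 < k)%N /\ n = (4 * k + 2)%N) ->
      is_zero (cylinder n m hn)).
Proof.
split=> [n m hn hm n_gt0 m_gt0 [n_ge4|m_ge4]|n m hn n_gt0 _ hnm].
- exact: torus_is_zero_wide.
- exact: torus_is_zero_tall.
have [n_ge4 hpar] : (4 <= n)%N /\ (odd n./2 || ~~ odd m).
  by case: hnm => [[n_ge4 ->]|[k [k_gt0 ->]]]; rewrite ?orbT; split => //; lia.
exact: cylinder_is_zero.
Qed.
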